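(* Let $k$ be an integer. (1) Any root quadruple $\mathbf a=(a,b,c,d)$ with $Q_{\mathcal D}(\mathbf a)=k$, $a\le b\le c\le d$ and $L(\mathbf a)>0$ satisfies $0\le b\le c\le d$; moreover, if $k>0$ then $a<0$, and if $k\le0$ then $a\le\sqrt{|k|}$. (2) For each pair of integers $(k,-n)$ there are only finitely many root quadruples $\mathbf a=(a,b,c,d)$, $a\le b\le c\le d$, with $Q_{\mathcal D}(\mathbf a)=k$ and $a=-n$, except for the pairs $(k,-n)=(4l^2,-l)$ with $l\ge0$; for each such exceptional pair there is an infinite family of root quadruples $\{(-l,l,c,c):c\ge\max(l,1)\}$.
   Context: $Q_{\mathcal D}(a,b,c,d)=2(a^2+b^2+c^2+d^2)-(a+b+c+d)^2$, $L(\mathbf a)=a+b+c+d$, $|\mathbf a|=|a|+|b|+|c|+|d|$. $\mathbf S_i$ ($i=1,\dots,4$) is the integer matrix replacing the $i$-th coordinate $a_i$ of a quadruple by $2\sum_{j\ne i}a_j-a_i$, other coordinates fixed. An integer quadruple is reduced if no $\mathbf S_i$ strictly decreases $|\cdot|$. A reduced quadruple ordered as $a\le b\le c\le d$ with $L\ge 0$ is a root quadruple if $a+b+c\ge d>0$; a reduced quadruple with $L<0$ is a root quadruple if $(-d,-c,-b,-a)$ is one. *)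

From Stdlib Require Import ZArith Reals List.
Open Scope Z_scope.

Record quad := Quad { q1 : Z; q2 : Z; q3 : Z; q4 : Z }.

Definition QD (q : quad) : Z :=
  2 * (q1 q ^ 2 + q2 q ^ 2 + q3 q ^ 2 + q4 q ^ 2)
  - (q1 q + q2 q + q3 q + q4 q) ^ 2.

Definition Lsum (q : quad) : Z := q1 q + q2 q + q3 q + q4 q.

Definition qnorm (q : quad) : Z :=
  Z.abs (q1 q) + Z.abs (q2 q) + Z.abs (q3 q) + Z.abs (q4 q).

Definition S1 (q : quad) : quad :=
  Quad (2 * (q2 q + q3 q + q4 q) - q1 q) (q2 q) (q3 q) (q4 q).
Definition S2 (q : quad) : quad :=
  Quad (q1 q) (2 * (q1 q + q3 q + q4 q) - q2 q) (q3 q) (q4 q).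
Definition S3 (q : quad) : quad :=
  Quad (q1 q) (q2 q) (2 * (q1 q + q2 q + q4 q) - q3 q) (q4 q).
Definition S4 (q : quad) : quad :=
  Quad (q1 q) (q2 q) (q3 q) (2 * (q1 q + q2 q + q3 q) - q4 q).

Definition reduced (q : quad) : Prop :=
  ~ (qnorm (S1 q) < qnorm q) /\ ~ (qnorm (S2 q) < qnorm q) /\
  ~ (qnorm (S3 q) < qnorm q) /\ ~ (qnorm (S4 q) < qnorm q).

Definition sorted_quad (q : quad) : Prop :=
  q1 q <= q2 q /\ q2 q <= q3 q /\ q3 q <= q4 q.

Definition neg_rev (q : quad) : quad :=
  Quad (- q4 q) (- q3 q) (- q2 q) (- q1 q).

Definition root_nonneg (q : quad) : Prop :=
  sorted_quad q /\ reduced q /\ 0 <= Lsum q /\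
  q1 q + q2 q + q3 q >= q4 q /\ q4 q > 0.

Definition root_quad (q : quad) : Prop :=
  sorted_quad q /\ reduced q /\
  ((0 <= Lsum q /\ root_nonneg q) \/ (Lsum q < 0 /\ root_nonneg (neg_rev q))).

(* For a root quadruple with c <= d <= a + b + c, Q_D splits as
     (a - b)^2 - 4c(a + b) - (d - c)^2 - 2(d - c)(a + b + c - d),
   whose last two terms are <= 0.  For a >= 0 the first two terms are <= 0 as
   well, and for a > 0 they are even <= -a^2; this is part (1).  For part (2)
   fix a = -n: either a + b = 0, which forces d = c, b = n and Q_D = 4n^2, or
   a + b >= 1, and then 4c(a + b) <= (a - b)^2 + |k| bounds b, then c, then
   d <= a + b + c.  Root quadruples with b + c + d <= a (the case L < 0) all
   lie in [a, -a]. *)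
From Stdlib Require Import ZArith Reals List Lia.
Open Scope Z_scope.

Lemma QD_Quad a b c d :
  QD (Quad a b c d) = 2 * (a ^ 2 + b ^ 2 + c ^ 2 + d ^ 2) - (a + b + c + d) ^ 2.
Proof. reflexivity. Qed.

Lemma QD_root_decomp a b c d :
  QD (Quad a b c d) =
  (a - b) ^ 2 - 4 * c * (a + b) - (d - c) ^ 2 - 2 * (d - c) * (a + b + c - d).
Proof. rewrite QD_Quad; ring. Qed.

Lemma QD_root_le a b c d :
  c <= d <= a + b + c ->
  4 * c * (a + b) <= (a - b) ^ 2 - QD (Quad a b c d).
Proof.
intros Hcd; rewrite QD_root_decomp.
assert (0 <= (d - c) ^ 2) by (rewrite Z.pow_2_r; apply Z.square_nonneg).
assert (0 <= (d - c) * (a + b + c - d)) by (apply Z.mul_nonneg_nonneg; lia).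
lia.
Qed.

Lemma QD_root_nonpos a b c d :
  0 <= a <= b -> b <= c <= d -> d <= a + b + c -> QD (Quad a b c d) <= 0.
Proof.
intros Hab Hbc Hd; pose proof (QD_root_le a b c d (conj (proj2 Hbc) Hd)) as Hle.
assert (0 <= a * (2 * b - a)) by (apply Z.mul_nonneg_nonneg; lia).
assert (b * b <= c * b) by (apply Z.mul_le_mono_nonneg_r; lia).
assert (0 <= c * (4 * a + 3 * b)) by (apply Z.mul_nonneg_nonneg; lia).
lia.
Qed.

Lemma sq_le_QD_root_opp a b c d :
  0 < a <= b -> b <= c <= d -> d <= a + b + c -> a ^ 2 <= - QD (Quad a b c d).
Proof.
intros Hab Hbc Hd; pose proof (QD_root_le a b c d (conj (proj2 Hbc) Hd)) as Hle.
assert (b * (a + b) <= c * (a + b)) by (apply Z.mul_le_mono_nonneg_r; lia).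
assert (a * a <= a * b) by (apply Z.mul_le_mono_nonneg_l; lia).
assert (a * b <= b * b) by (apply Z.mul_le_mono_nonneg_r; lia).
lia.
Qed.

Lemma QD_root_degenerate a b c d :
  a + b = 0 -> c <= d <= a + b + c -> QD (Quad a b c d) = 4 * a ^ 2.
Proof.
intros Hab Hd; assert (d = c) by lia; assert (b = - a) by lia; subst.
rewrite QD_Quad; ring.
Qed.

Lemma root_quad_cases a b c d :
  root_quad (Quad a b c d) -> d <= a + b + c \/ b + c + d <= a.
Proof.
unfold root_quad, root_nonneg; cbn.
intros (_ & _ & [(_ & _ & _ & _ & H & _) | (_ & _ & _ & _ & H & _)]); lia.
Qed.

Lemma IZR_le_sqrt a m : (0 < a -> a ^ 2 <= m) -> (IZR a <= sqrt (IZR m))%R.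
Proof.
intros Hm; destruct (Z_le_gt_dec a 0) as [Ha | Ha].
- apply Rle_trans with 0%R; [now apply IZR_le | apply sqrt_pos].
- rewrite <- (Rabs_pos_eq (IZR a)) by (apply IZR_le; lia).
  rewrite <- sqrt_Rsqr_abs; apply sqrt_le_1_alt.
  unfold Rsqr; rewrite <- mult_IZR; apply IZR_le; nia.
Qed.

(* Since c >= b, 4c(a + b) <= (a - b)^2 + |k| gives 3(a + b)^2 <= |k| + 4a^2,
   so a + b >= 1 bounds b, and then c <= 4c(a + b) is bounded too. *)
Lemma root_coords_bounded a k :
  exists M, forall b c d,
    a <= b <= c -> c <= d <= a + b + c -> 0 < a + b -> QD (Quad a b c d) = k ->
    Z.abs b <= M /\ Z.abs c <= M /\ Z.abs d <= M.
Proof.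
set (B := Z.abs k + 4 * a ^ 2 + Z.abs a).
set (C := (Z.abs a + B) ^ 2 + Z.abs k).
exists (Z.abs a + B + C); intros b c d Hbc Hd Hab HQ.
pose proof (QD_root_le a b c d Hd) as Hle; rewrite HQ in Hle.
assert (Hcb : b * (a + b) <= c * (a + b)) by (apply Z.mul_le_mono_nonneg_r; lia).
assert (Hsq : 3 * (a + b) ^ 2 <= Z.abs k + 4 * a ^ 2) by lia.
assert ((a + b) * 1 <= (a + b) ^ 2) by (rewrite Z.pow_2_r; apply Z.mul_le_mono_nonneg_l; lia).
assert (Hb : b <= B) by (unfold B; lia).
assert (Hab2 : (a - b) ^ 2 <= (Z.abs a + B) ^ 2).
{ replace ((a - b) ^ 2) with ((b - a) ^ 2) by ring; apply Z.pow_le_mono_l; lia. }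
assert (c * 1 <= c * (a + b)) by (apply Z.mul_le_mono_nonneg_l; lia).
assert (Hc : c <= C) by (unfold C; lia).
assert (HB : 0 <= Z.abs a + B) by (unfold B; lia).
clearbody B C; clear - Hbc Hd Hab Hb Hc HB; lia.
Qed.

Lemma root_quad_bounded a k :
  ~ (a <= 0 /\ k = 4 * a ^ 2) ->
  exists M, forall b c d,
    root_quad (Quad a b c d) -> a <= b <= c /\ c <= d -> QD (Quad a b c d) = k ->
    Z.abs b <= M /\ Z.abs c <= M /\ Z.abs d <= M.
Proof.
intros Hk; destruct (root_coords_bounded a k) as [M HM].
exists (Z.abs a + Z.abs M); intros b c d Hroot Hs HQ.
destruct (root_quad_cases a b c d Hroot) as [Hd | Hd]; [| lia].
destruct (Z.eq_dec (a + b) 0) as [Hab | Hab].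
- exfalso; apply Hk; split; [lia |].
  now rewrite <- HQ; apply QD_root_degenerate.
- destruct (HM b c d) as (? & ? & ?); lia.
Qed.

Definition Zinterval (M : Z) : list Z :=
  map (fun i => Z.of_nat i - M) (seq 0 (Z.to_nat (2 * M + 1))).

Lemma in_Zinterval M x : Z.abs x <= M -> In x (Zinterval M).
Proof.
intros Hx; apply in_map_iff; exists (Z.to_nat (x + M)); split.
- rewrite Z2Nat.id; lia.
- apply in_seq; lia.
Qed.

Lemma bounded_quads_listable (P : Z -> Z -> Z -> Prop) a M :
  (forall b c d, P b c d -> Z.abs b <= M /\ Z.abs c <= M /\ Z.abs d <= M) ->
  exists s, forall b c d, P b c d -> In (Quad a b c d) s.
Proof.
intros HM.
exists (flat_map (fun b => flat_map (fun c =>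
          map (fun d => Quad a b c d) (Zinterval M)) (Zinterval M)) (Zinterval M)).
intros b c d HP; destruct (HM b c d HP) as (Hb & Hc & Hd).
apply in_flat_map; exists b; split; [now apply in_Zinterval |].
apply in_flat_map; exists c; split; [now apply in_Zinterval |].
now apply in_map, in_Zinterval.
Qed.

Lemma root_quad_exceptional l c :
  0 <= l -> Z.max l 1 <= c -> root_quad (Quad (- l) l c c).
Proof.
intros Hl Hc.
assert (Hred : reduced (Quad (- l) l c c))
  by (unfold reduced, qnorm, S1, S2, S3, S4; cbn [q1 q2 q3 q4]; lia).
unfold root_quad, root_nonneg, sorted_quad, Lsum; cbn [q1 q2 q3 q4].
split; [lia | split; [exact Hred |]].
left; split; [lia | split; [lia | split; [exact Hred | lia]]].
Qed.

Theorem theorem3p3 (k : Z) :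
  (* (1) *)
  (forall a b c d : Z,
     root_quad (Quad a b c d) -> QD (Quad a b c d) = k ->
     a <= b <= c /\ c <= d -> Lsum (Quad a b c d) > 0 ->
     (0 <= b /\ b <= c /\ c <= d) /\
     (k > 0 -> a < 0) /\
     (k <= 0 -> (IZR a <= sqrt (IZR (Z.abs k)))%R)) /\
  (* (2) *)
  (forall n : Z,
     (~ (exists l : Z, 0 <= l /\ k = 4 * l ^ 2 /\ n = l)) ->
     exists s : list quad,
       forall b c d : Z,
         root_quad (Quad (- n) b c d) -> (- n) <= b <= c /\ c <= d ->
         QD (Quad (- n) b c d) = k -> In (Quad (- n) b c d) s) /\
  (forall l : Z, 0 <= l -> k = 4 * l ^ 2 ->
     forall c : Z, Z.max l 1 <= c ->
       root_quad (Quad (- l) l c c) /\ QD (Quad (- l) l c c) = k).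
Proof.
split; [| split].
- intros a b c d Hroot HQ Hs HL; unfold Lsum in HL; cbn in HL.
  assert (Hd : d <= a + b + c) by (destruct (root_quad_cases a b c d Hroot); lia).
  split; [lia | split].
  + intros Hk; pose proof (QD_root_nonpos a b c d); lia.
  + intros Hk; apply IZR_le_sqrt; intros Ha.
    pose proof (sq_le_QD_root_opp a b c d); lia.
- intros n Hn.
  destruct (root_quad_bounded (- n) k) as [M HM].
  { intros [Hle Hk]; apply Hn; exists n; rewrite Hk; split; [lia | split; [ring | easy]]. }
  set (P b c d := root_quad (Quad (- n) b c d) /\ (- n <= b <= c /\ c <= d) /\
                  QD (Quad (- n) b c d) = k).
  destruct (bounded_quads_listable P (- n) M) as [s Hs].
  { intros b c d (? & ? & ?); now apply HM. }
  exists s; intros b c d ? ? ?; now apply Hs.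
- intros l Hl Hk c Hc; split; [now apply root_quad_exceptional |].
  rewrite QD_Quad, Hk; ring.
Qed.
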